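(* Let $S$ be an $(l,r)$-framed algebra and define $(-,-):S\times S\to\mathbb{C}$ by $(a,b)1=(-1)^{s(\lambda)}a\cdot_0 b$ for $a\in S_\lambda$, $b\in S$ (bilinearly extended). Then for all $\lambda^i$ and $a_i\in S_{\lambda^i}$: (1) $S_{\lambda^1}$ and $S_{\lambda^2}$ are orthogonal if $\lambda^1\ne\lambda^2$; (2) the form is symmetric; (3) $(a_1\cdot a_2,a_3)=(-1)^{s(\lambda^1)}(a_2,a_1\cdot a_3)$; (4) the form is non-degenerate if and only if $S$ is simple.
   Context: Let $\mathrm{IS}=\{0,\frac12,\frac1{16}\}$ with fusion rule $\star$ (values are subsets): $0\star h=h\star0=\{h\}$, $\frac12\star\frac12=\{0\}$, $\frac12\star\frac1{16}=\frac1{16}\star\frac12=\{\frac1{16}\}$, $\frac1{16}\star\frac1{16}=\{0,\frac12\}$; $A(h_0,h_1,h_2,h_3)=\{h: h\in h_2\star h_3,\ h_0\in h_1\star h\}$. For $h\in A(h_0,h_1,h_2,h_3)$, $h'\in A(h_0,h_2,h_1,h_3)$ define $B^{h,h'}_{h_0,h_1,h_2,h_3}$: $B_{*,0,*,*}=B_{*,*,0,*}=1$; $B_{*,\frac12,\frac12,*}=-1$; $B_{a,\frac12,\frac1{16},a'}=B_{a,\frac1{16},\frac12,a'}=i$ if $a$ or $a'$ is $\frac12$, else $-i$; $B^{b,b'}_{a,\frac1{16},\frac1{16},a'}=e^{-\pi i/8}\cdot\{1$ if $a,a'\ne\frac1{16},a=a'$; $i$ if $a,a'\neq\frac1{16},a\ne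 a'$; $\frac{1+i}2$ if $a=a'=\frac1{16},b=b'$; $\frac{1-i}2$ if $a=a'=\frac1{16},b\neq b'\}$. $\mathrm{IS}^{(l,r)}=\mathrm{IS}^l\times\mathrm{IS}^r$, $\lambda=(h_1,..,h_l,\bar h_1,..,\bar h_r)$, $s(\lambda)=\sum h_i-\sum\bar h_j$; $\star$, $A$ componentwise; $B^{\lambda,\lambda'}_{\lambda^0,\dots,\lambda^3}=\prod_{i\le l}B^{h_i,h'_i}_{h^0_i,\dots,h^3_i}\prod_{j\le r}\overline{B^{\bar h_j,\bar h'_j}_{\bar h^0_j,\dots,\bar h^3_j}}$. An $(l,r)$-framed algebra: finite-dimensional $\mathrm{IS}^{(l,r)}$-graded $S=\bigoplus S_\lambda$ over $\mathbb{C}$ with bilinear product, nonzero $1\in S_0$ ($0=(0,\dots,0)$), $a\cdot_\lambda b$ the $S_\lambda$-component of $a\cdot b$, satisfying (FA1) $S_\lambda=0$ unless $s(\lambda)\in\mathbb{Z}$; (FA2) $S_0=\mathbb{C}1$, $1$ a two-sided unit; (FA3) $S_{\lambda^1}\cdot S_{\lambda^2}\subset\bigoplus_{\lambda\in\lambda^1\star\lambda^2}S_\lambda$; (FA4) $a_2\cdot_{\lambda^0}(a_1\cdot_{\lambda'}a_3)=\sum_{\lambda\in A(\lambda^0,\lambda^1,\lambda^2,\lambda^3)}B^{\lambda,\lambda'}_{\lambda^0,\lambda^1,\lambda^2,\lambda^3}a_1\cdot_{\lambda^0}(a_2\cdot_\lambda a_3)$ for $a_i\in S_{\lambda^i}$,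 $\lambda'\in A(\lambda^0,\lambda^2,\lambda^1,\lambda^3)$. An ideal is a graded subspace $M$ with $S\cdot M\subset M$; $S$ is simple if its only ideals are $0$ and $S$. *)

From HB Require Import structures.
From mathcomp Require Import all_boot all_order all_algebra.
Set Implicit Arguments. Unset Strict Implicit. Unset Printing Implicit Defensive.
Import Order.TTheory GRing.Theory Num.Theory.
Local Open Scope ring_scope.

Inductive IS := I0 | Ihalf | I16.

Definition IS_to (x : IS) : 'I_3 :=
  match x with I0 => inord 0 | Ihalf => inord 1 | I16 => inord 2 end.
Definition IS_of (i : 'I_3) : IS :=
  match val i with 0%N => I0 | 1%N => Ihalf | _ => I16 end.
Lemma IS_K : cancel IS_to IS_of.
Proof. by case; rewrite /IS_of /= inordK. Qed.
HB.instance Definition _ := Finite.copy IS (can_type IS_K).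

Definition hval (h : IS) : rat :=
  match h with I0 => 0 | Ihalf => 1 / 2 | I16 => 1 / 16 end.

(* fusion rule: fus h1 h2 h  <=>  h \in h1 * h2 *)
Definition fus (h1 h2 h : IS) : bool :=
  match h1, h2 with
  | I0, _ => h == h2
  | _, I0 => h == h1
  | Ihalf, Ihalf => h == I0
  | Ihalf, I16 | I16, Ihalf => h == I16
  | I16, I16 => (h == I0) || (h == Ihalf)
  end.

Definition Aset1 (h0 h1 h2 h3 h : IS) : bool := fus h2 h3 h && fus h1 h h0.

Section Bdef.
Variable C : numClosedFieldType.

(* e^{-pi i/8}: 8.-root (-1) is e^{pi i/8} (the 8th root of -1 with maximal
   real part among those with nonnegative imaginary part). *)
Definition eps8 : C := (8.-root (-1 : C))^-1.

(* B^{h,h'}_{a,h1,h2,a'} ; value 0 in the combinations not covered by the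
   paper (they never occur with h \in A(..), h' \in A(..)). *)
Definition Bc (h h' a h1 h2 a' : IS) : C :=
  match h1, h2 with
  | I0, _ => 1
  | _, I0 => 1
  | Ihalf, Ihalf => -1
  | Ihalf, I16 | I16, Ihalf =>
      if (a == Ihalf) || (a' == Ihalf) then 'i else - 'i
  | I16, I16 =>
      eps8 * (if (a != I16) && (a' != I16) then
                (if a == a' then 1 else 'i)
              else if (a == I16) && (a' == I16) then
                (if h == h' then (1 + 'i) / 2 else (1 - 'i) / 2)
              else 0)
  end.
End Bdef.

Definition Lam (l r : nat) : finType :=
  ({ffun 'I_l -> IS} * {ffun 'I_r -> IS})%type.

Definition lam0 (l r : nat) : Lam l r := ([ffun => I0], [ffun => I0]).

Definition sLam l r (x : Lam l r) : rat :=
  (\sum_(i < l) hval (x.1 i)) - (\sum_(j < r) hval (x.2 j)).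

Definition starL l r (x1 x2 x : Lam l r) : bool :=
  [forall i, fus (x1.1 i) (x2.1 i) (x.1 i)] &&
  [forall j, fus (x1.2 j) (x2.2 j) (x.2 j)].

Definition AL l r (x0 x1 x2 x3 x : Lam l r) : bool :=
  [forall i, Aset1 (x0.1 i) (x1.1 i) (x2.1 i) (x3.1 i) (x.1 i)] &&
  [forall j, Aset1 (x0.2 j) (x1.2 j) (x2.2 j) (x3.2 j) (x.2 j)].

Definition BL (C : numClosedFieldType) l r (x x' x0 x1 x2 x3 : Lam l r) : C :=
  (\prod_(i < l) Bc C (x.1 i) (x'.1 i) (x0.1 i) (x1.1 i) (x2.1 i) (x3.1 i)) *
  (\prod_(j < r) (Bc C (x.2 j) (x'.2 j) (x0.2 j) (x1.2 j) (x2.2 j) (x3.2 j))^*).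

(* (-1)^{s(lambda)}; only relevant when s(lambda) is an integer (FA1) *)
Definition signL (C : numClosedFieldType) l r (x : Lam l r) : C :=
  (-1) ^ (numq (sLam x)).

Section Framed.
Variables (C : numClosedFieldType) (l r : nat) (V : vectType C).
Variables (Sg : Lam l r -> {vspace V}) (mul : V -> V -> V) (one : V).

Definition gcomp (x : Lam l r) : 'End(V) :=
  sumv_pi (\sum_(mu : Lam l r) Sg mu)%VS x.

Definition mulc (x : Lam l r) (a b : V) : V := gcomp x (mul a b).

Definition framed_algebra : Prop :=
  [/\ (
      ((\sum_(mu : Lam l r) Sg mu)%VS = fullv /\ directv (\sum_(mu : Lam l r) Sg mu)) /\
      ((forall (k : C) a a' b, mul (k *: a + a') b = k *: mul a b + mul a' b) /\
       (forall (k : C) a b b', mul a (k *: b + b') = k *: mul a b + mul a b'))),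
      (* FA1 *)
      (forall x, sLam x \isn't a Num.int -> Sg x = 0%VS),
      [/\ one != 0, Sg (lam0 l r) = <[one]>%VS &
          (forall a, mul one a = a /\ mul a one = a)],
      (forall x1 x2 a1 a2, a1 \in Sg x1 -> a2 \in Sg x2 ->
          mul a1 a2 \in (\sum_(x | starL x1 x2 x) Sg x)%VS) &
      (* FA4 *)
      (forall x0 x1 x2 x3 x' a1 a2 a3,
          a1 \in Sg x1 -> a2 \in Sg x2 -> a3 \in Sg x3 -> AL x0 x2 x1 x3 x' ->
          mulc x0 a2 (mulc x' a1 a3) =
          \sum_(x | AL x0 x1 x2 x3 x) BL C x x' x0 x1 x2 x3 *: mulc x0 a1 (mulc x a2 a3))].

(* the scalar c with c * 1 = v, for v \in S_0 = C 1 *)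
Definition scal0 (v : V) : C := coord [tuple one] ord0 v.

Definition bform (a b : V) : C :=
  \sum_(x : Lam l r) signL C x * scal0 (mulc (lam0 l r) (gcomp x a) b).

Definition graded_subspace (M : {vspace V}) : Prop :=
  M = (\sum_(x : Lam l r) (M :&: Sg x))%VS.

Definition graded_ideal (M : {vspace V}) : Prop :=
  graded_subspace M /\ forall a m, m \in M -> mul a m \in M.

Definition simple_alg : Prop :=
  forall M, graded_ideal M -> M = 0%VS \/ M = fullv.

Definition nondeg_bform : Prop :=
  forall a, (forall b, bform a b = 0) -> a = 0.

End Framed.

From HB Require Import structures.
From mathcomp Require Import all_boot all_order all_algebra.
From mathcomp Require Import zify ring.
Set Implicit Arguments. Unset Strict Implicit. Unset Printing Implicit Defensive.
Import Order.TTheory GRing.Theory Num.Theory.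
Local Open Scope ring_scope.

(* The braiding coefficients are powers of [eps8 = exp (- pi i / 8)], and two
   instances of (FA4) drive the proof.  With [a3 = 1] it becomes a commutation
   rule [b ._mu a = B *: a ._mu b]; for [a, b] in [S_lambda] and [mu = 0] the
   coefficient is [exp (- 2 pi i s(lambda)) = 1], which gives symmetry.  With
   [lambda^0 = 0] it gives a hexagon relation whose coefficients multiply to the
   sign [(-1)^(s(lambda^1) + s(lambda^2) + s(lambda^3))], which gives
   invariance.  Orthogonality is the grading of [._0].  By invariance the
   radical of the form is a graded ideal, and it is proper since [(1, 1) = 1].
   Conversely, a nonzero ideal [M] contains some [a] with [(b, a) <> 0], so the
   degree-0 part of [b a] is a nonzero multiple of [1] lying in [M]. *)

Section Phases.
Variable C : numClosedFieldType.

Lemma Im_expr4_ge0 (y : C) : 0 <= 'Im y <= 'Re y -> 0 <= 'Im (y ^+ 4).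
Proof.
set a := 'Re y; set b := 'Im y; case/andP=> b_ge0 b_le_a.
have a_ge0 := le_trans b_ge0 b_le_a.
have Dy2 : y ^+ 2 = (a * a - b * b) + 'i * (a * b + a * b).
  by rewrite expr2 {1 2}(Crect y) mulC_rect.
have p_ge0 : 0 <= a * a - b * b by rewrite subr_ge0 ler_pM.
have q_ge0 : 0 <= a * b + a * b by rewrite addr_ge0 // mulr_ge0.
rewrite (exprM y 2 2) Dy2 expr2 mulC_rect Im_rect.
- by rewrite addr_ge0 // mulr_ge0.
- by rewrite rpredB ?rpredM ?ger0_real.
- by rewrite rpredD ?rpredM ?ger0_real.
Qed.

(* [8.-root (-1)] maximises the real part among the 8th roots of [-1] in the
   upper half plane; comparing it with [- y^*] and ['i * y^*] puts it in the
   sector [0 <= arg y <= pi/4]. *)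
Lemma root8N1_sector : 0 <= 'Im (8.-root (-1 : C)) <= 'Re (8.-root (-1 : C)).
Proof.
set y := 8.-root (-1 : C).
have y8 : y ^+ 8 = -1 by apply: rootCK.
have y8c : y^* ^+ 8 = -1 by rewrite -rmorphXn y8 rmorphN1.
have b_ge0 : 0 <= 'Im y by apply: Im_rootC_ge0.
have Dyc : y^* = 'Re y - 'i * 'Im y by rewrite {1}(Crect y) conjC_rect ?Creal_Re ?Creal_Im.
have a_ge0 : 0 <= 'Re y.
  have z8 : (- y^*) ^+ 8 = -1 by rewrite exprNn y8c -signr_odd /= expr0 mul1r.
  have := rootC_Re_max (isT : (0 < 8)%N) z8.
  rewrite !raddfN /= Im_conj Re_conj opprK => /(_ b_ge0).
  by rewrite -subr_ge0 opprK -mulr2n pmulrn_lge0.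
rewrite b_ge0 /=.
have z8 : ('i * y^*) ^+ 8 = -1.
  by rewrite exprMn y8c -[8%N]/(2 * 4)%N exprM sqrCi -signr_odd /= expr0 mul1r.
have Dz : 'i * y^* = 'Im y + 'i * 'Re y.
  by rewrite Dyc mulrBr mulrA mulCii mulN1r opprK addrC.
have := rootC_Re_max (isT : (0 < 8)%N) z8.
by rewrite Dz Re_rect ?Im_rect ?Creal_Re ?Creal_Im //; apply.
Qed.

Lemma root8N1_expr4 : 8.-root (-1 : C) ^+ 4 = 'i.
Proof.
set y := 8.-root (-1 : C).
have : (y ^+ 4 - 'i) * (y ^+ 4 + 'i) = 0.
  by rewrite -subr_sqr -exprM (rootCK (isT : (0 < 8)%N)) sqrCi subrr.
move/eqP; rewrite mulf_eq0 subr_eq0 addr_eq0 => /orP[/eqP // | /eqP y4].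
have := Im_expr4_ge0 root8N1_sector; rewrite -/y y4 raddfN /= Im_i.
by rewrite ler0N1.
Qed.

Local Notation eps := (eps8 C).

Lemma eps8_neq0 : eps != 0.
Proof. by rewrite invr_eq0 rootC_eq0 // oppr_eq0 oner_eq0. Qed.

Lemma eps8_expr8 : eps ^+ 8 = -1.
Proof. by rewrite exprVn rootCK // invrN1. Qed.

Lemma eps8_expr4 : eps ^+ 4 = - 'i.
Proof. by rewrite exprVn root8N1_expr4 invCi. Qed.

Lemma conj_eps8 : eps^* = eps^-1.
Proof.
have eps_norm1 : `|eps| = 1 by rewrite normfV norm_rootC normrN1 rootC1 ?invr1.
apply: (mulfI eps8_neq0); rewrite divff ?eps8_neq0 //.
by rewrite -normCK eps_norm1 expr1n.
Qed.

Definition phase (z : int) : C := eps ^ z.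

Lemma phaseD a b : phase (a + b) = phase a * phase b.
Proof. exact: expfzDr eps8_neq0. Qed.

Lemma phase_sum (I : finType) (P : pred I) (f : I -> int) :
  \prod_(i | P i) phase (f i) = phase (\sum_(i | P i) f i).
Proof. by rewrite (big_morph phase phaseD (erefl : phase 0 = 1)). Qed.

Lemma phase16 z : phase (16 * z) = 1.
Proof.
have eps16 : eps ^ 16 = 1.
  by rewrite -[_ ^ _]/(eps ^+ (8 * 2)) exprM eps8_expr8 sqrrN expr1n.
by rewrite /phase -exprz_exp eps16 exp1rz.
Qed.

Lemma phase_mod16 a b : (16 %| a - b)%Z -> phase a = phase b.
Proof.
by case/dvdzP=> k Dab; rewrite -(subrK b a) Dab phaseD [k * _]mulrC phase16 mul1r.
Qed.

Lemma phase4 : phase 4 = - 'i. Proof. exact: eps8_expr4. Qed.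
Lemma phase8 : phase 8 = -1. Proof. exact: eps8_expr8. Qed.
Lemma phase12 : phase 12 = 'i.
Proof. by rewrite -[12]/(8 + 4 : int) phaseD phase8 phase4 mulN1r opprK. Qed.

Lemma conj_phase z : (phase z)^* = phase (- z).
Proof. by rewrite /phase fmorphXz /= conj_eps8 exprz_inv. Qed.

End Phases.

Definition IS_eqb (a b : IS) : bool :=
  match a, b with I0, I0 | Ihalf, Ihalf | I16, I16 => true | _, _ => false end.

Lemma IS_eqE a b : (a == b) = IS_eqb a b.
Proof. by case: a; case: b; rewrite ?eqxx //; apply/negbTE/eqP. Qed.

Lemma fusC a b c : fus a b c = fus b a c.
Proof. by case: a; case: b; case: c. Qed.

Lemma fus_swap23 a b c : fus a b c = fus a c b.
Proof. by case: a; case: b; case: c; rewrite /fus ?IS_eqE. Qed.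

Lemma fus_id0 h : fus h I0 h.
Proof. by case: h; rewrite /fus ?IS_eqE. Qed.

Lemma fus_self0 h : fus h h I0.
Proof. by case: h; rewrite /fus ?IS_eqE. Qed.

Lemma fus0_eq a b : fus a b I0 -> a = b.
Proof. by case: a; case: b; rewrite /fus ?IS_eqE. Qed.

(* [wt h = 16 h], and [phase (wt h) = exp (- 2 pi i h)]. *)
Definition wt (h : IS) : int := match h with I0 => 0 | Ihalf => 8 | I16 => 1 end.

Lemma hvalE h : hval h = (wt h)%:~R / 16.
Proof. by case: h. Qed.

Definition hexagon_exp (h1 h2 h3 : IS) : int := ((3 * wt h3 - wt h1 - wt h2) %/ 2)%Z.

Lemma hexagon_expP h1 h2 h3 : fus h1 h2 h3 ->
  2 * hexagon_exp h1 h2 h3 = 3 * wt h3 - wt h1 - wt h2.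
Proof. by case: h1; case: h2; case: h3; rewrite /fus ?IS_eqE. Qed.

Section IsingPhases.
Variable C : numClosedFieldType.

Lemma Bc_twist h : Bc C h h I0 h h I0 = phase C (wt h).
Proof. by case: h; rewrite /Bc ?IS_eqE /= ?phase8 ?mulr1. Qed.

Lemma Bc_hexagon h1 h2 h3 : fus h1 h2 h3 ->
  Bc C h1 h3 I0 h1 h3 h2 * Bc C h3 h2 h1 h2 h3 I0 =
  phase C (hexagon_exp h1 h2 h3) * Bc C h1 h2 I0 h1 h2 h3.
Proof.
have phase0 : phase C 0 = 1 by [].
have phase1 : phase C 1 = eps8 C by [].
case: h1; case: h2; case: h3; rewrite /fus ?IS_eqE //= => _;
rewrite /Bc ?IS_eqE /= -?phase4 -?phase8 -?phase12 -?phase0 -?phase1 -?phaseD;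
by apply: phase_mod16.
Qed.

End IsingPhases.

Section LabelFusion.
Variables l r : nat.
Implicit Types x : Lam l r.
Local Notation z0 := (lam0 l r).

Lemma forall_andb (T : finType) (P Q : pred T) :
  [forall i, P i && Q i] = [forall i, P i] && [forall i, Q i].
Proof.
apply/forallP/andP => [PQ | [/forallP P_all /forallP Q_all] i]; last by rewrite P_all Q_all.
by split; apply/forallP => i; case/andP: (PQ i).
Qed.

Lemma AL_starL x0 x1 x2 x3 x :
  AL x0 x1 x2 x3 x = starL x2 x3 x && starL x1 x x0.
Proof. by rewrite /AL /starL /Aset1 !forall_andb andbACA. Qed.

Lemma starLC x1 x2 x3 : starL x1 x2 x3 = starL x2 x1 x3.
Proof. by rewrite /starL; congr andb; apply: eq_forallb => i; rewrite fusC. Qed.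

Lemma starL_swap23 x1 x2 x3 : starL x1 x2 x3 = starL x1 x3 x2.
Proof. by rewrite /starL; congr andb; apply: eq_forallb => i; rewrite fus_swap23. Qed.

Lemma starL_rotate x1 x2 x3 : starL x1 x2 x3 = starL x2 x3 x1.
Proof. by rewrite starLC starL_swap23. Qed.

Lemma starL_id0 x : starL x z0 x.
Proof. by apply/andP; split; apply/forallP => i; rewrite ffunE fus_id0. Qed.

Lemma starL_self0 x : starL x x z0.
Proof. by apply/andP; split; apply/forallP => i; rewrite ffunE fus_self0. Qed.

Lemma starL0_eq x y : starL x y z0 -> x = y.
Proof.
case: x y => [x1 x2] [y1 y2] /andP[/forallP fus1 /forallP fus2] /=.
by congr pair; apply/ffunP => i; apply: fus0_eq; [move: (fus1 i) | move: (fus2 i)];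
  rewrite ffunE.
Qed.

End LabelFusion.

Section LabelPhases.
Variables (C : numClosedFieldType) (l r : nat).
Implicit Types x : Lam l r.
Local Notation z0 := (lam0 l r).

Definition wtL x : int := \sum_(i < l) wt (x.1 i) - \sum_(j < r) wt (x.2 j).

Lemma sLamE x : sLam x = (wtL x)%:~R / 16.
Proof.
rewrite /sLam /wtL; under eq_bigr do rewrite hvalE.
under [X in _ - X]eq_bigr do rewrite hvalE.
by rewrite -!mulr_suml rmorphB /= !rmorph_sum mulrBl.
Qed.

Lemma sLam_intP x : sLam x \is a Num.int ->
  exists m : int, wtL x = 16 * m /\ signL C x = phase C (8 * m).
Proof.
case/intrP=> m Dm; exists m; split.
  apply/eqP; rewrite -(eqr_int rat) rmorphM /=.
  by move: Dm; rewrite sLamE => /(canRL (mulfK _)) -> //; rewrite mulrC.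
by rewrite /signL Dm numq_int -phase8 /phase exprz_exp.
Qed.

Lemma BL_twist x : sLam x \is a Num.int -> BL C x x z0 x x z0 = 1.
Proof.
case/sLam_intP=> m [Dw _]; rewrite /BL /lam0 /=.
under eq_bigr do rewrite ffunE Bc_twist.
under [X in _ * X]eq_bigr do rewrite ffunE Bc_twist conj_phase.
by rewrite !phase_sum -phaseD sumrN -/(wtL x) Dw phase16.
Qed.

Definition hexagon_expL x1 x2 x3 : int :=
  \sum_(i < l) hexagon_exp (x1.1 i) (x2.1 i) (x3.1 i) -
  \sum_(j < r) hexagon_exp (x1.2 j) (x2.2 j) (x3.2 j).

Lemma hexagon_expLP x1 x2 x3 : starL x1 x2 x3 ->
  2 * hexagon_expL x1 x2 x3 = 3 * wtL x3 - wtL x1 - wtL x2.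
Proof.
case/andP=> /forallP fusL /forallP fusR.
rewrite /hexagon_expL /wtL mulrBr !mulr_sumr.
rewrite (eq_bigr _ (fun i _ => hexagon_expP (fusL i))).
rewrite [X in _ - X](eq_bigr _ (fun j _ => hexagon_expP (fusR j))).
by rewrite !sumrB -!mulr_sumr; ring.
Qed.

Lemma BL_hexagon_phase x1 x2 x3 : starL x1 x2 x3 ->
  BL C x1 x3 z0 x1 x3 x2 * BL C x3 x2 x1 x2 x3 z0 =
  phase C (hexagon_expL x1 x2 x3) * BL C x1 x2 z0 x1 x2 x3.
Proof.
case/andP=> /forallP fusL /forallP fusR.
rewrite /BL /lam0 /= mulrACA -!big_split /=.
under eq_bigr do rewrite !ffunE Bc_hexagon //.
under [X in _ * X]eq_bigr do rewrite !ffunE -rmorphM Bc_hexagon // rmorphM /= conj_phase.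
rewrite !big_split /= !phase_sum mulrACA -phaseD sumrN.
by congr (_ * (_ * _)); apply: eq_bigr => i _; rewrite ffunE.
Qed.

Lemma BL_hexagon x1 x2 x3 :
  sLam x1 \is a Num.int -> sLam x2 \is a Num.int -> sLam x3 \is a Num.int ->
  starL x1 x2 x3 ->
  signL C x3 * (BL C x1 x3 z0 x1 x3 x2 * BL C x3 x2 x1 x2 x3 z0) =
  signL C x1 * signL C x2 * BL C x1 x2 z0 x1 x2 x3.
Proof.
case/sLam_intP=> m1 [w1 ->]; case/sLam_intP=> m2 [w2 ->].
case/sLam_intP=> m3 [w3 ->] s123.
have := hexagon_expLP s123; rewrite w1 w2 w3 => hex.
rewrite BL_hexagon_phase // mulrA -!phaseD; congr (_ * _).
apply: phase_mod16; apply/dvdzP; exists (2 * m3 - m1 - m2); lia.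
Qed.

End LabelPhases.

Section FramedAlgebra.
Variables (C : numClosedFieldType) (l r : nat) (V : vectType C).
Variables (Sg : Lam l r -> {vspace V}) (mul : V -> V -> V) (one : V).
Hypothesis S_framed : framed_algebra Sg mul one.
Implicit Types (x y : Lam l r) (a b v : V).

Local Notation gc := (gcomp Sg).
Local Notation mc := (mulc Sg mul).
Local Notation z0 := (lam0 l r).
Local Notation bf := (bform Sg mul one).

Lemma Sg_sum_full : (\sum_x Sg x)%VS = fullv.
Proof. by case: S_framed => [[[]]]. Qed.

Lemma Sg_direct : directv (\sum_x Sg x).
Proof. by case: S_framed => [[[]]]. Qed.

Lemma mulvDZl k a a' b : mul (k *: a + a') b = k *: mul a b + mul a' b.
Proof. by case: S_framed => [[_ []]]. Qed.

Lemma mulvDZr k a b b' : mul a (k *: b + b') = k *: mul a b + mul a b'.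
Proof. by case: S_framed => [[_ []]]. Qed.

Lemma Sg_nonint x : sLam x \isn't a Num.int -> Sg x = 0%VS.
Proof. by case: S_framed => _ Sg0 _ _ _; apply: Sg0. Qed.

Lemma one_neq0 : one != 0.
Proof. by case: S_framed => _ _ []. Qed.

Lemma Sg_lam0 : Sg z0 = <[one]>%VS.
Proof. by case: S_framed => _ _ []. Qed.

Lemma one_in_lam0 : one \in Sg z0.
Proof. by rewrite Sg_lam0 memv_line. Qed.

Lemma mulv1 a : mul a one = a.
Proof. by case: S_framed => _ _ [_ _ unit]; case: (unit a). Qed.

Lemma mul_fusion x1 x2 a1 a2 : a1 \in Sg x1 -> a2 \in Sg x2 ->
  mul a1 a2 \in (\sum_(x | starL x1 x2 x) Sg x)%VS.
Proof. by case: S_framed => _ _ _ FA3 _; apply: FA3. Qed.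

Lemma mulc_braid x0 x1 x2 x3 x' a1 a2 a3 :
  a1 \in Sg x1 -> a2 \in Sg x2 -> a3 \in Sg x3 -> AL x0 x2 x1 x3 x' ->
  mc x0 a2 (mc x' a1 a3) =
  \sum_(x | AL x0 x1 x2 x3 x) BL C x x' x0 x1 x2 x3 *: mc x0 a1 (mc x a2 a3).
Proof. by case: S_framed => _ _ _ _ FA4; apply: FA4. Qed.

Lemma mulvDl a a' b : mul (a + a') b = mul a b + mul a' b.
Proof. by rewrite -[a in LHS]scale1r mulvDZl scale1r. Qed.

Lemma mulvDr a b b' : mul a (b + b') = mul a b + mul a b'.
Proof. by rewrite -[b in LHS]scale1r mulvDZr scale1r. Qed.

Lemma mul0v b : mul 0 b = 0.
Proof. by apply: (addrI (mul 0 b)); rewrite addr0 -mulvDl addr0. Qed.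

Lemma mulv0 a : mul a 0 = 0.
Proof. by apply: (addrI (mul a 0)); rewrite addr0 -mulvDr addr0. Qed.

Lemma mulvZr k a b : mul a (k *: b) = k *: mul a b.
Proof. by rewrite -[_ *: b]addr0 mulvDZr mulv0 addr0. Qed.

Lemma mulv_suml (I : finType) (F : I -> V) b :
  mul (\sum_i F i) b = \sum_i mul (F i) b.
Proof. exact: (big_morph (mul^~ b) (fun a a' => mulvDl a a' b) (mul0v b)). Qed.

Lemma mulv_sumr (I : finType) (F : I -> V) a :
  mul a (\sum_i F i) = \sum_i mul a (F i).
Proof. exact: (big_morph (mul a) (fun b b' => mulvDr a b b') (mulv0 a)). Qed.

Lemma gcomp_in x v : gc x v \in Sg x.
Proof. exact: memv_sum_pi. Qed.

Lemma gcomp_sum v : \sum_x gc x v = v.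
Proof. by apply: sumv_pi_sum; rewrite Sg_sum_full memvf. Qed.

Lemma gcompE x y v : v \in Sg y -> gc x v = if x == y then v else 0.
Proof.
move=> vy; pose vs i := if i == y then v else 0.
have vs_in i : true -> vs i \in Sg i by rewrite /vs; case: eqP => [->|]; rewrite ?mem0v.
have sum_vs : \sum_i vs i = v.
  by rewrite (big_only1 y) // => [|i /negPf]; rewrite /vs ?eqxx // => ->.
have := elimT directv_sum_unique Sg_direct _ _ (fun i _ => gcomp_in i v) vs_in.
by rewrite gcomp_sum sum_vs eqxx => /esym/forallP/(_ x)/implyP/(_ isT)/eqP.
Qed.

Lemma gcomp_id x v : v \in Sg x -> gc x v = v.
Proof. by move/(gcompE x); rewrite eqxx. Qed.

Lemma gcomp_sum0 (P : pred (Lam l r)) v y :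
  v \in (\sum_(x | P x) Sg x)%VS -> ~~ P y -> gc y v = 0.
Proof.
case/memv_sumP=> vs vs_in -> Py_false; rewrite linear_sum big1 // => x Px /=.
by rewrite (gcompE _ (vs_in x Px)); case: eqP => // Dy; rewrite Dy Px in Py_false.
Qed.

Lemma mulc_in x a b : mc x a b \in Sg x.
Proof. exact: gcomp_in. Qed.

Lemma mulc0v x b : mc x 0 b = 0.
Proof. by rewrite /mulc mul0v linear0. Qed.

Lemma mulcv0 x a : mc x a 0 = 0.
Proof. by rewrite /mulc mulv0 linear0. Qed.

Lemma mulcvZ x k a b : mc x a (k *: b) = k *: mc x a b.
Proof. by rewrite /mulc mulvZr linearZ. Qed.

Lemma mulcv1 x a : mc x a one = gc x a.
Proof. by rewrite /mulc mulv1. Qed.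

Lemma mulc_fusion0 x1 x2 x a1 a2 : a1 \in Sg x1 -> a2 \in Sg x2 ->
  ~~ starL x1 x2 x -> mc x a1 a2 = 0.
Proof. by move=> a1_in a2_in; apply: gcomp_sum0; apply: mul_fusion. Qed.

Lemma mulc0_neq x y a b : a \in Sg x -> b \in Sg y -> x != y -> mc z0 a b = 0.
Proof.
move=> a_in b_in neq_xy; apply: (mulc_fusion0 a_in b_in).
by apply: contra neq_xy => /starL0_eq ->.
Qed.

Lemma homogeneous_nonint0 x a : a \in Sg x -> sLam x \isn't a Num.int -> a = 0.
Proof. by move=> a_in /Sg_nonint Sg_x0; move: a_in; rewrite Sg_x0 memv0 => /eqP. Qed.

(* (FA4) with [a3 = 1]. *)
Lemma mulc_swap x x1 x2 a1 a2 : a1 \in Sg x1 -> a2 \in Sg x2 -> starL x1 x2 x ->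
  mc x a2 a1 = BL C x2 x1 x x1 x2 z0 *: mc x a1 a2.
Proof.
move=> a1_in a2_in s12.
have := mulc_braid a1_in a2_in one_in_lam0 (x' := x1) (x0 := x).
rewrite AL_starL starL_id0 starLC s12 mulcv1 gcomp_id // => /(_ isT) ->.
rewrite (big_only1 x2) ?AL_starL ?starL_id0 // ?mulcv1 ?gcomp_id // => y neq_yx2 _.
by rewrite mulcv1 (gcompE _ a2_in) (negPf neq_yx2) mulcv0 scaler0.
Qed.

Lemma mulc0_braid x1 x2 x3 a1 a2 a3 :
  a1 \in Sg x1 -> a2 \in Sg x2 -> a3 \in Sg x3 -> starL x1 x2 x3 ->
  mc z0 a2 (mc x2 a1 a3) = BL C x1 x2 z0 x1 x2 x3 *: mc z0 a1 (mc x1 a2 a3).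
Proof.
move=> a1_in a2_in a3_in s123.
rewrite (mulc_braid a1_in a2_in a3_in); last by rewrite AL_starL starL_self0 -starL_swap23 s123.
rewrite (big_only1 x1) // => [|y neq_yx1 _].
  by rewrite AL_starL starL_self0 andbT -starL_rotate.
by rewrite (mulc0_neq a1_in (mulc_in _ _ _) (_ : x1 != y)) ?scaler0 // eq_sym.
Qed.

Lemma scal0P k u v : scal0 one (k *: u + v) = k * scal0 one u + scal0 one v.
Proof. exact: linearP. Qed.

Lemma scal0_0 : scal0 one 0 = 0.
Proof. exact: linear0. Qed.

Lemma scal0Z k v : scal0 one (k *: v) = k * scal0 one v.
Proof. exact: linearZ. Qed.

Lemma scal0_one : scal0 one one = 1.
Proof.
rewrite /scal0 (@coord_free _ _ 1 [tuple one] ord0 ord0) ?eqxx //.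
by rewrite seq1_free one_neq0.
Qed.

Lemma scal0K v : v \in Sg z0 -> v = scal0 one v *: one.
Proof. by rewrite Sg_lam0 -span_seq1 => /coord_span {1}->; rewrite big_ord1. Qed.

Lemma bformE x a b : a \in Sg x -> bf a b = signL C x * scal0 one (mc z0 a b).
Proof.
move=> a_in; rewrite /bform (big_only1 x) ?gcomp_id // => y neq_yx _.
by rewrite (gcompE _ a_in) (negPf neq_yx) mulc0v scal0_0 mulr0.
Qed.

Lemma bform_linl k a a' b : bf (k *: a + a') b = k * bf a b + bf a' b.
Proof.
rewrite /bform mulr_sumr -big_split; apply: eq_bigr => x _ /=.
by rewrite /mulc linearP /= mulvDZl linearP /= scal0P mulrDr mulrCA.
Qed.

Lemma bform_linr k a b b' : bf a (k *: b + b') = k * bf a b + bf a b'.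
Proof.
rewrite /bform mulr_sumr -big_split; apply: eq_bigr => x _ /=.
by rewrite /mulc mulvDZr linearP /= scal0P mulrDr mulrCA.
Qed.

Lemma bform0v b : bf 0 b = 0.
Proof. by rewrite /bform big1 // => x _; rewrite linear0 mulc0v scal0_0 mulr0. Qed.

Lemma bformv0 a : bf a 0 = 0.
Proof. by rewrite /bform big1 // => x _; rewrite mulcv0 scal0_0 mulr0. Qed.

Lemma bformvZ k a b : bf a (k *: b) = k * bf a b.
Proof. by rewrite -[k *: b]addr0 bform_linr bformv0 addr0. Qed.

Lemma bform_suml (I : finType) (F : I -> V) b :
  bf (\sum_i F i) b = \sum_i bf (F i) b.
Proof.
apply: (big_morph (bf^~ b) _ (bform0v b)) => a a'.
by rewrite -[a in LHS]scale1r bform_linl mul1r.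
Qed.

Lemma bform_sumr (I : finType) (F : I -> V) a :
  bf a (\sum_i F i) = \sum_i bf a (F i).
Proof.
apply: (big_morph (bf a) _ (bformv0 a)) => b b'.
by rewrite -[b in LHS]scale1r bform_linr mul1r.
Qed.

Lemma bform_orth x1 x2 a1 a2 : x1 != x2 -> a1 \in Sg x1 -> a2 \in Sg x2 ->
  bf a1 a2 = 0.
Proof.
by move=> neq12 a1_in a2_in; rewrite (bformE _ a1_in) (mulc0_neq a1_in a2_in) ?scal0_0 ?mulr0.
Qed.

Lemma bform_gcompl y a b : b \in Sg y -> bf a b = bf (gc y a) b.
Proof.
move=> b_in; rewrite -{1}(gcomp_sum a) bform_suml (big_only1 y) // => x neq_xy _.
exact: bform_orth neq_xy (gcomp_in _ _) b_in.
Qed.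

Lemma bform_gcompr x a b : a \in Sg x -> bf a b = bf a (gc x b).
Proof.
move=> a_in; rewrite -{1}(gcomp_sum b) bform_sumr (big_only1 x) // => y neq_yx _.
by apply: bform_orth a_in (gcomp_in _ _); rewrite eq_sym.
Qed.

Lemma bform_gcomp x a b : bf (gc x a) b = bf a (gc x b).
Proof. by rewrite (bform_gcompr _ (gcomp_in x a)) [RHS](bform_gcompl _ (gcomp_in x b)). Qed.

Lemma bform_sym_homogeneous x a b : a \in Sg x -> b \in Sg x -> bf a b = bf b a.
Proof.
move=> a_in b_in; have [x_int | x_nonint] := boolP (sLam x \is a Num.int); last first.
  by rewrite (homogeneous_nonint0 a_in x_nonint) bform0v bformv0.
rewrite (bformE _ a_in) (bformE _ b_in) (mulc_swap a_in b_in (starL_self0 x)).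
by rewrite BL_twist // scale1r.
Qed.

Lemma bform_diag a b : bf a b = \sum_x bf (gc x a) (gc x b).
Proof.
rewrite -{1}(gcomp_sum a) bform_suml; apply: eq_bigr => x _.
exact: bform_gcompr (gcomp_in x a).
Qed.

Lemma bform_sym a b : bf a b = bf b a.
Proof.
rewrite !bform_diag; apply: eq_bigr => x _.
exact: bform_sym_homogeneous (gcomp_in x a) (gcomp_in x b).
Qed.

(* Both sides become multiples of [a1 ._0 (a2 ._x1 a3)]: the left one by a
   twist, a braid and a swap, the right one by a braid; [BL_hexagon] matches
   the coefficients. *)
Lemma bform_triple x1 x2 x3 a1 a2 a3 :
  a1 \in Sg x1 -> a2 \in Sg x2 -> a3 \in Sg x3 ->
  sLam x1 \is a Num.int -> sLam x2 \is a Num.int -> sLam x3 \is a Num.int ->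
  starL x1 x2 x3 ->
  signL C x3 * scal0 one (mc z0 (mc x3 a1 a2) a3) =
  signL C x1 * signL C x2 * scal0 one (mc z0 a2 (mc x2 a1 a3)).
Proof.
move=> a1_in a2_in a3_in x1_int x2_int x3_int s123.
have s132 : starL x1 x3 x2 by rewrite -starL_swap23.
have s231 : starL x2 x3 x1 by rewrite -starL_rotate.
rewrite (mulc_swap a3_in (mulc_in x3 a1 a2) (starL_self0 x3)) BL_twist // scale1r.
rewrite (mulc0_braid a1_in a3_in a2_in s132) (mulc_swap a2_in a3_in s231) mulcvZ.
rewrite (mulc0_braid a1_in a2_in a3_in s123) !scal0Z [RHS]mulrA.
by rewrite -(BL_hexagon C x1_int x2_int x3_int s123); ring.
Qed.

Lemma bform_invariant x1 x2 x3 a1 a2 a3 :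
  a1 \in Sg x1 -> a2 \in Sg x2 -> a3 \in Sg x3 ->
  bf (mul a1 a2) a3 = signL C x1 * bf a2 (mul a1 a3).
Proof.
move=> a1_in a2_in a3_in.
have [x1_int | /(homogeneous_nonint0 a1_in) ->] := boolP (sLam x1 \is a Num.int); last first.
  by rewrite !mul0v bform0v bformv0 mulr0.
have [x2_int | /(homogeneous_nonint0 a2_in) ->] := boolP (sLam x2 \is a Num.int); last first.
  by rewrite mulv0 !bform0v mulr0.
have [x3_int | /(homogeneous_nonint0 a3_in) ->] := boolP (sLam x3 \is a Num.int); last first.
  by rewrite mulv0 !bformv0 mulr0.
rewrite (bform_gcompl _ a3_in) (bformE _ (gcomp_in x3 _)).
rewrite (bform_gcompr _ a2_in) (bformE _ a2_in) mulrA -/(mc x3 a1 a2) -/(mc x2 a1 a3).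
have [s123 | ns123] := boolP (starL x1 x2 x3); first exact: bform_triple.
rewrite (mulc_fusion0 a1_in a2_in ns123) (mulc_fusion0 a1_in a3_in (x := x2)).
  by rewrite mulc0v mulcv0 scal0_0 !mulr0.
by rewrite -starL_swap23.
Qed.

Definition bform_row v : 'rV[C]_(\dim {:V}) := \row_i bf v (vbasis {:V})`_i.

Fact bform_row_linear : linear bform_row.
Proof. by move=> k u v; apply/rowP => i; rewrite !mxE bform_linl. Qed.

HB.instance Definition _ :=
  GRing.isLinear.Build C V 'rV[C]_(\dim {:V}) *:%R bform_row bform_row_linear.

Definition radical : {vspace V} := lker (linfun bform_row).

Lemma radicalP v : reflect (forall b, bf v b = 0) (v \in radical).
Proof.
rewrite memv_ker lfunE /=; apply: (iffP eqP) => [row0 b | v_orth].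
  rewrite (coord_vbasis (memvf b)) bform_sumr big1 // => i _.
  by rewrite bformvZ; move/rowP: row0 => /(_ i); rewrite !mxE => ->; rewrite mulr0.
by apply/rowP => i; rewrite !mxE v_orth.
Qed.

Lemma radical_gcomp x v : v \in radical -> gc x v \in radical.
Proof. by move/radicalP=> v_orth; apply/radicalP => b; rewrite bform_gcomp v_orth. Qed.

Lemma radical_graded : graded_subspace Sg radical.
Proof.
apply/eqP; rewrite eqEsubv; apply/andP; split; last first.
  by apply/subv_sumP => x _; apply: capvSl.
apply/subvP => v v_rad; rewrite -(gcomp_sum v); apply: memv_sumr => x _.
by rewrite memv_cap gcomp_in radical_gcomp.
Qed.

Lemma radical_ideal : graded_ideal Sg mul radical.
Proof.
split=> [|a m m_rad]; first exact: radical_graded.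
apply/radicalP => b.
rewrite -(gcomp_sum a) mulv_suml bform_suml big1 // => x _.
rewrite -(gcomp_sum m) mulv_sumr bform_suml big1 // => y _.
rewrite -(gcomp_sum b) bform_sumr big1 // => z _.
rewrite (bform_invariant (gcomp_in x a) (gcomp_in y m) (gcomp_in z b)).
by move/radicalP: (radical_gcomp y m_rad) => ->; rewrite mulr0.
Qed.

Lemma bform_one : bf one one = 1.
Proof.
have sLam0 : sLam z0 = 0 by rewrite /sLam !big1 ?subrr // => i _; rewrite ffunE.
by rewrite (bformE _ one_in_lam0) mulcv1 (gcomp_id one_in_lam0) scal0_one mulr1 /signL sLam0.
Qed.

Lemma bform_witness a : nondeg_bform Sg mul one -> a != 0 -> exists b, bf a b != 0.
Proof.
move=> nondeg a_neq0.
have [/existsP[i bf_i] | /existsPn bf_basis0] :=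
  boolP [exists i : 'I_(\dim {:V}), bf a (vbasis {:V})`_i != 0].
  by exists (vbasis {:V})`_i.
case/eqP: a_neq0; apply: nondeg; apply/radicalP; rewrite memv_ker lfunE /=.
by apply/eqP/rowP => i; rewrite !mxE; move/negPn/eqP: (bf_basis0 i).
Qed.

Lemma graded_gcomp M x m : graded_subspace Sg M -> m \in M -> gc x m \in M.
Proof.
rewrite /graded_subspace => DM; rewrite {1}DM => /memv_sumP[ms ms_in ->].
rewrite linear_sum (big_only1 x) //=.
  by have /memv_capP[mx_in mx_Sg] := ms_in x isT; rewrite gcomp_id.
move=> y neq_yx _; have /memv_capP[_ my_Sg] := ms_in y isT.
by rewrite (gcompE _ my_Sg) eq_sym (negPf neq_yx).
Qed.

Lemma ideal_one_full M : graded_ideal Sg mul M -> one \in M -> M = fullv.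
Proof.
by case=> _ M_ideal one_in; apply/vspaceP => v; rewrite memvf -(mulv1 v) M_ideal.
Qed.

Lemma ideal_pairing M a b : graded_ideal Sg mul M -> a \in M -> bf b a != 0 ->
  one \in M.
Proof.
case=> M_graded M_ideal a_in; apply: contraTT => one_notin.
rewrite negbK /bform big1 // => y _; set c := mc z0 (gc y b) a.
have [-> | c_neq0] := eqVneq (scal0 one c) 0; first by rewrite mulr0.
have c_in : c \in M by apply: graded_gcomp M_graded (M_ideal _ _ a_in).
have c_Sg0 : c \in Sg z0 by apply: mulc_in.
have := memvZ (scal0 one c)^-1 c_in; rewrite {2}(scal0K c_Sg0).
by rewrite scalerA mulVf // scale1r (negPf one_notin).
Qed.

Lemma nondeg_simple : nondeg_bform Sg mul one -> simple_alg Sg mul.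
Proof.
move=> nondeg M M_ideal; have [-> | M_neq0] := eqVneq M 0%VS; [by left | right].
have [b ab_neq0] : exists b, bf (vpick M) b != 0.
  by apply: bform_witness nondeg _; rewrite vpick0.
apply: ideal_one_full M_ideal (ideal_pairing (b := b) M_ideal (memv_pick M) _).
by rewrite (bform_sym b).
Qed.

Lemma simple_nondeg : simple_alg Sg mul -> nondeg_bform Sg mul one.
Proof.
move=> simple a /radicalP a_rad.
case: (simple _ radical_ideal) => [rad0 | rad_full].
  by move: a_rad; rewrite rad0 memv0 => /eqP.
have := memvf one; rewrite -rad_full => /radicalP/(_ one)/eqP.
by rewrite bform_one oner_eq0.
Qed.

End FramedAlgebra.

Theorem mainTheorem3 (C : numClosedFieldType) (l r : nat) (V : vectType C)
    (Sg : Lam l r -> {vspace V}) (mul : V -> V -> V) (one : V) :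
  framed_algebra Sg mul one ->
  [/\ (* (1) orthogonality of distinct graded pieces *)
      (forall x1 x2 a1 a2, x1 != x2 -> a1 \in Sg x1 -> a2 \in Sg x2 ->
         bform Sg mul one a1 a2 = 0),
      (* (2) symmetry *)
      (forall a b, bform Sg mul one a b = bform Sg mul one b a),
      (* (3) invariance *)
      (forall x1 x2 x3 a1 a2 a3, a1 \in Sg x1 -> a2 \in Sg x2 -> a3 \in Sg x3 ->
         bform Sg mul one (mul a1 a2) a3 =
         signL C x1 * bform Sg mul one a2 (mul a1 a3)) &
      (* (4) non-degenerate iff simple *)
      (nondeg_bform Sg mul one <-> simple_alg Sg mul)].
Proof.
move=> S_framed; split.
- by move=> x1 x2 a1 a2; apply: bform_orth.
- exact: bform_sym.
- by move=> x1 x2 x3 a1 a2 a3; apply: bform_invariant.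
- by split; [apply: nondeg_simple | apply: simple_nondeg].
Qed.
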